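(* For every set $\Gamma\cup\{\varphi\}$ of formulas over $\Sigma^\circ$: if $\Gamma\vDash^{\mathsf{RN}}_{\mathcal{M}_{\bf mbCcl}}\varphi$ then $\Gamma\vdash_{\bf mbCcl}\varphi$.
   Context: $\Sigma^\circ$ has unary $\neg,\circ$ and binary $\wedge,\vee,\to$. ${\bf mbCcl}$ is the Hilbert calculus with Modus Ponens as only rule and axiom schemata: $\alpha\to(\beta\to\alpha)$; $(\alpha\to(\beta\to\gamma))\to((\alpha\to\beta)\to(\alpha\to\gamma))$; $\alpha\to(\beta\to(\alpha\wedge\beta))$; $(\alpha\wedge\beta)\to\alpha$; $(\alpha\wedge\beta)\to\beta$; $\alpha\to(\alpha\vee\beta)$; $\beta\to(\alpha\vee\beta)$; $(\alpha\to\gamma)\to((\beta\to\gamma)\to((\alpha\vee\beta)\to\gamma))$; $\alpha\vee\neg\alpha$; $\alpha\vee(\alpha\to\beta)$; $\circ\alpha\to(\alpha\to(\neg\alpha\to\beta))$; $\neg(\alpha\wedge\neg\alpha)\to\circ\alpha$. $\mathcal{A}_{\bf mbCcl}$ is the $\Sigma^\circ$-multialgebra with universe $\{F,t,T\}$, $D=\{t,T\}$, $U=\{F\}$: $x\tilde\vee y=U$ if $x=y=F$, else $D$; $x\tilde\wedge y=U$ if $F\in\{x,y\}$, else $D$; $\tilde\neg F=\tilde\neg t=D$, $\tilde\neg T=U$; $F\tilde\to y=D$, $x\tilde\to F=U$ for $x\in\{t,T\}$, $x\tilde\to y=D$ for $x,y\in\{t,T\}$; $\tilde\circ F=\tilde\circ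 T=D$, $\tilde\circ t=U$. A valuation is a map $\nu$ with $\nu(\#\alpha)\in\tilde\#\nu(\alpha)$ and $\nu(\alpha\#\beta)\in\nu(\alpha)\tilde\#\nu(\beta)$. $\mathcal{F}_{\bf mbCcl}$ is the set of valuations with $\nu(\alpha)=t\Rightarrow\nu(\alpha\wedge\neg\alpha)=T$ for all $\alpha$. $\Gamma\vDash^{\mathsf{RN}}_{\mathcal{M}_{\bf mbCcl}}\varphi$ iff every $\nu\in\mathcal{F}_{\bf mbCcl}$ with $\nu[\Gamma]\subseteq D$ has $\nu(\varphi)\in D$. *)

From Stdlib Require Import Classical.

Inductive form : Type :=
| Var : nat -> form
| Neg : form -> form
| Circ : form -> form
| And : form -> form -> form
| Or : form -> form -> form
| Imp : form -> form -> form.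

Inductive mbCcl_axiom : form -> Prop :=
| Ax1 a b : mbCcl_axiom (Imp a (Imp b a))
| Ax2 a b c : mbCcl_axiom (Imp (Imp a (Imp b c)) (Imp (Imp a b) (Imp a c)))
| Ax3 a b : mbCcl_axiom (Imp a (Imp b (And a b)))
| Ax4 a b : mbCcl_axiom (Imp (And a b) a)
| Ax5 a b : mbCcl_axiom (Imp (And a b) b)
| Ax6 a b : mbCcl_axiom (Imp a (Or a b))
| Ax7 a b : mbCcl_axiom (Imp b (Or a b))
| Ax8 a b c : mbCcl_axiom (Imp (Imp a c) (Imp (Imp b c) (Imp (Or a b) c)))
| Ax9 a : mbCcl_axiom (Or a (Neg a))
| Ax10 a b : mbCcl_axiom (Or a (Imp a b))
| Ax11 a b : mbCcl_axiom (Imp (Circ a) (Imp a (Imp (Neg a) b)))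
| Ax12 a : mbCcl_axiom (Imp (Neg (And a (Neg a))) (Circ a)).

Inductive derivable (Gamma : form -> Prop) : form -> Prop :=
| d_hyp phi : Gamma phi -> derivable Gamma phi
| d_ax phi : mbCcl_axiom phi -> derivable Gamma phi
| d_mp phi psi : derivable Gamma phi -> derivable Gamma (Imp phi psi) ->
                 derivable Gamma psi.

Inductive tv : Type := vF | vt | vT.

Definition designated (x : tv) : Prop := x = vt \/ x = vT.

(* A multioperation outputs either D or U; we encode the output set by a bool:
   true = D, false = U, and [memb b z] is membership of z in that set. *)
Definition memb (b : bool) (z : tv) : Prop :=
  if b then designated z else z = vF.

Definition m_or (x y : tv) : bool :=
  match x, y with vF, vF => false | _, _ => true end.
Definition m_and (x y : tv) : bool :=
  match x, y with vF, _ => false | _, vF => false | _, _ => true end.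
Definition m_neg (x : tv) : bool :=
  match x with vF => true | vt => true | vT => false end.
Definition m_imp (x y : tv) : bool :=
  match x, y with vF, _ => true | _, vF => false | _, _ => true end.
Definition m_circ (x : tv) : bool :=
  match x with vF => true | vt => false | vT => true end.

Definition valuation (v : form -> tv) : Prop :=
  (forall a, memb (m_neg (v a)) (v (Neg a))) /\
  (forall a, memb (m_circ (v a)) (v (Circ a))) /\
  (forall a b, memb (m_and (v a) (v b)) (v (And a b))) /\
  (forall a b, memb (m_or (v a) (v b)) (v (Or a b))) /\
  (forall a b, memb (m_imp (v a) (v b)) (v (Imp a b))).

Definition F_mbCcl (v : form -> tv) : Prop :=
  valuation v /\ (forall a, v a = vt -> v (And a (Neg a)) = vT).

Definition RN_consequence (Gamma : form -> Prop) (phi : form) : Prop :=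
  forall v, F_mbCcl v -> (forall g, Gamma g -> designated (v g)) -> designated (v phi).

(* The proof is the usual canonical-model argument.  Suppose Gamma does not
   derive phi.
   - Lindenbaum: Gamma extends to a set Delta that is phi-saturated: closed
     under derivability, not containing phi, and such that any formula x
     outside Delta yields phi, i.e. Delta |- x -> phi.  Formulas are enumerated
     through an injective coding into nat, and one adds the n-th formula
     whenever doing so keeps phi underivable; the deduction theorem turns
     maximality into the form above.
   - Truth lemmas: the axioms of mbCcl force a saturated set to behave like a
     classical theory for /\, \/, ->, to contain one of a and ~a, and to
     relate o a with the (in)consistency of a.
   - Canonical valuation: a |-> F if a is not in Delta, t if both a and ~a are
     in Delta, T otherwise.  The truth lemmas show that it is a valuation of
     A_mbCcl satisfying the restriction F_mbCcl, and its designated formulas are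
     exactly those of Delta.  It therefore designates Gamma but not phi, so phi
     is not an RN-consequence of Gamma. *)
From Stdlib Require Import Classical ClassicalEpsilon Lia Cantor.

Fixpoint code (f : form) : nat :=
  match f with
  | Var n => Cantor.to_nat (0, n)
  | Neg a => Cantor.to_nat (1, code a)
  | Circ a => Cantor.to_nat (2, code a)
  | And a b => Cantor.to_nat (3, Cantor.to_nat (code a, code b))
  | Or a b => Cantor.to_nat (4, Cantor.to_nat (code a, code b))
  | Imp a b => Cantor.to_nat (5, Cantor.to_nat (code a, code b))
  end.

Lemma to_nat_inj (p q : nat * nat) : Cantor.to_nat p = Cantor.to_nat q -> p = q.
Proof. intro H. rewrite <- (cancel_of_to p), <- (cancel_of_to q), H. reflexivity. Qed.

Lemma code_inj (x y : form) : code x = code y -> x = y.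
Proof.
  revert y; induction x; destruct y; cbn [code]; intro H; apply to_nat_inj in H;
  apply pair_equal_spec in H as [Htag Hargs]; try discriminate;
  try (apply to_nat_inj in Hargs; apply pair_equal_spec in Hargs as [Hargs1 Hargs2]);
  f_equal; auto.
Qed.

Lemma derivable_mono (G H : form -> Prop) (f : form) :
  (forall x, G x -> H x) -> derivable G f -> derivable H f.
Proof.
  intros Hsub Hd; induction Hd.
  - apply d_hyp; auto.
  - apply d_ax; auto.
  - exact (d_mp _ _ _ IHHd1 IHHd2).
Qed.

Lemma imp_self (G : form -> Prop) (a : form) : derivable G (Imp a a).
Proof.
  eapply d_mp; [apply d_ax, (Ax1 a a)|].
  eapply d_mp; [apply d_ax, (Ax1 a (Imp a a))|].
  apply d_ax, Ax2.
Qed.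

Lemma deduction (G : form -> Prop) (a b : form) :
  derivable (fun y => G y \/ y = a) b -> derivable G (Imp a b).
Proof.
  intro Hd; induction Hd as [x [Hx|Hx]| x Hx | x y _ IHx _ IHxy].
  - eapply d_mp; [apply d_hyp, Hx | apply d_ax, Ax1].
  - subst; apply imp_self.
  - eapply d_mp; [apply d_ax, Hx | apply d_ax, Ax1].
  - eapply d_mp; [exact IHx|]. eapply d_mp; [exact IHxy|]. apply d_ax, Ax2.
Qed.

Definition saturated (Delta : form -> Prop) (phi : form) : Prop :=
  (forall x, derivable Delta x -> Delta x) /\
  ~ Delta phi /\
  (forall x, ~ Delta x -> derivable Delta (Imp x phi)).

Section Lindenbaum.
Variable Gamma : form -> Prop.
Variable phi : form.

Fixpoint stage (n : nat) : form -> Prop :=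
  match n with
  | 0 => Gamma
  | S n => fun x => stage n x \/
                    (code x = n /\ ~ derivable (fun y => stage n y \/ y = x) phi)
  end.

Definition limit (x : form) : Prop := exists n, stage n x.

Lemma stage_mono (n m : nat) (x : form) : n <= m -> stage n x -> stage m x.
Proof. induction 1; simpl; auto. Qed.

(* Derivations are finite, so they only use premises of some stage. *)
Lemma limit_derivable_stage (f : form) :
  derivable limit f -> exists n, derivable (stage n) f.
Proof.
  induction 1 as [x [n Hn] | x Hx | x y _ [n1 H1] _ [n2 H2]].
  - exists n. apply d_hyp, Hn.
  - exists 0. apply d_ax, Hx.
  - exists (n1 + n2). eapply d_mp.
    + eapply derivable_mono; [|exact H1]. intros; eapply stage_mono; [|eauto]; lia.
    + eapply derivable_mono; [|exact H2]. intros; eapply stage_mono; [|eauto]; lia.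
Qed.

Hypothesis Gamma_nd : ~ derivable Gamma phi.

Lemma stage_nd (n : nat) : ~ derivable (stage n) phi.
Proof.
  induction n as [|n IHn]; simpl; auto.
  intro Hd.
  destruct (classic (exists x, code x = n /\
                       ~ derivable (fun y => stage n y \/ y = x) phi))
    as [[x [Hcode Hx]]|Hnone].
  - (* the only formula added at this stage is x *)
    apply Hx. eapply derivable_mono; [|exact Hd].
    intros y [Hy|[Hy _]]; auto. right. apply code_inj. congruence.
  - (* nothing was added *)
    apply IHn. eapply derivable_mono; [|exact Hd].
    intros y [Hy|Hy]; auto. exfalso. apply Hnone. exists y; exact Hy.
Qed.

Lemma limit_nd : ~ derivable limit phi.
Proof.
  intro Hd. destruct (limit_derivable_stage _ Hd) as [n Hn]. exact (stage_nd n Hn).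
Qed.

Lemma limit_maximal (x : form) : ~ limit x -> derivable limit (Imp x phi).
Proof.
  intro Hx. apply deduction. apply NNPP; intro Hnd.
  apply Hx. exists (S (code x)). simpl. right. split; auto.
  intro Hd. apply Hnd. eapply derivable_mono; [|exact Hd].
  intros y [Hy|Hy]; [left; exists (code x); exact Hy | right; exact Hy].
Qed.

Lemma limit_saturated : saturated limit phi.
Proof.
  assert (Hcl : forall x, derivable limit x -> limit x).
  { intros x Hx. apply NNPP; intro Hnx. apply limit_nd.
    exact (d_mp _ _ _ Hx (limit_maximal x Hnx)). }
  split; [exact Hcl | split; [|exact limit_maximal]].
  intro Hphi. apply limit_nd, d_hyp, Hphi.
Qed.

End Lindenbaum.

Lemma lindenbaum (Gamma : form -> Prop) (phi : form) :
  ~ derivable Gamma phi ->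
  exists Delta, (forall g, Gamma g -> Delta g) /\ saturated Delta phi.
Proof.
  intro Hnd. exists (limit Gamma phi). split.
  - intros g Hg. exists 0. exact Hg.
  - exact (limit_saturated Gamma phi Hnd).
Qed.

Section TruthLemmas.
Variable Delta : form -> Prop.
Variable phi : form.
Hypothesis Delta_sat : saturated Delta phi.

Lemma sat_closed (x : form) : derivable Delta x -> Delta x.
Proof. apply Delta_sat. Qed.

Lemma sat_avoids : ~ Delta phi.
Proof. apply Delta_sat. Qed.

Lemma sat_axiom (a : form) : mbCcl_axiom a -> Delta a.
Proof. intro Ha; apply sat_closed, d_ax, Ha. Qed.

Lemma sat_mp (a b : form) : Delta a -> Delta (Imp a b) -> Delta b.
Proof. intros Ha Hab; apply sat_closed; exact (d_mp _ _ _ (d_hyp _ _ Ha) (d_hyp _ _ Hab)). Qed.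

Lemma sat_and (a b : form) : Delta (And a b) <-> Delta a /\ Delta b.
Proof.
  split.
  - intro H; split; eapply sat_mp; eauto using sat_axiom, Ax4, Ax5.
  - intros [Ha Hb]. eapply sat_mp; [exact Hb|].
    eapply sat_mp; [exact Ha|]. apply sat_axiom, Ax3.
Qed.

(* The disjunction property uses maximality: if neither disjunct is in Delta,
   both imply phi, hence so does the disjunction (Ax8). *)
Lemma sat_or (a b : form) : Delta (Or a b) <-> Delta a \/ Delta b.
Proof.
  split.
  - intro H. apply NNPP; intro Hn. apply sat_avoids, sat_closed.
    assert (Ha : derivable Delta (Imp a phi)) by (apply Delta_sat; tauto).
    assert (Hb : derivable Delta (Imp b phi)) by (apply Delta_sat; tauto).
    eapply d_mp; [apply d_hyp, H|].
    eapply d_mp; [exact Hb|]. eapply d_mp; [exact Ha|]. apply d_ax, Ax8.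
  - intros [H|H]; eapply sat_mp; eauto using sat_axiom, Ax6, Ax7.
Qed.

(* Ax10 makes implication classical in a saturated set. *)
Lemma sat_imp (a b : form) : Delta (Imp a b) <-> (~ Delta a \/ Delta b).
Proof.
  split.
  - intro H. destruct (classic (Delta a)); [right; eapply sat_mp; eauto | left; auto].
  - intros [H|H].
    + pose proof (sat_axiom _ (Ax10 a b)) as Hab. apply sat_or in Hab. tauto.
    + eapply sat_mp; [exact H|]. apply sat_axiom, Ax1.
Qed.

Lemma sat_neg_of_not (a : form) : ~ Delta a -> Delta (Neg a).
Proof. intro H. pose proof (sat_axiom _ (Ax9 a)) as Hx. apply sat_or in Hx. tauto. Qed.

Lemma sat_circ_explosion (a : form) :
  Delta (Circ a) -> Delta a -> Delta (Neg a) -> False.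
Proof.
  intros Hc Ha Hna. apply sat_avoids.
  eapply sat_mp; [exact Hna|]. eapply sat_mp; [exact Ha|].
  eapply sat_mp; [exact Hc|]. apply sat_axiom, Ax11.
Qed.

Lemma sat_circ_intro (a : form) : Delta (Neg (And a (Neg a))) -> Delta (Circ a).
Proof. intro H. eapply sat_mp; [exact H|]. apply sat_axiom, Ax12. Qed.

Definition canonical (a : form) : tv :=
  match excluded_middle_informative (Delta a) with
  | right _ => vF
  | left _ => match excluded_middle_informative (Delta (Neg a)) with
              | left _ => vt
              | right _ => vT
              end
  end.

Lemma canonical_designated (a : form) : designated (canonical a) <-> Delta a.
Proof.
  unfold canonical, designated.
  destruct (excluded_middle_informative (Delta a)).
  - destruct (excluded_middle_informative (Delta (Neg a))); intuition.
  - split; [intros [H|H]; discriminate | tauto].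
Qed.

Lemma canonical_t (a : form) : canonical a = vt <-> Delta a /\ Delta (Neg a).
Proof.
  unfold canonical.
  destruct (excluded_middle_informative (Delta a));
    [destruct (excluded_middle_informative (Delta (Neg a)))|];
    split; intro; try discriminate; intuition.
Qed.

Lemma canonical_T (a : form) : canonical a = vT <-> Delta a /\ ~ Delta (Neg a).
Proof.
  unfold canonical.
  destruct (excluded_middle_informative (Delta a));
    [destruct (excluded_middle_informative (Delta (Neg a)))|];
    split; intro; try discriminate; intuition.
Qed.

Lemma canonical_memb (b : bool) (a : form) :
  (b = true <-> Delta a) -> memb b (canonical a).
Proof.
  intro Hb. destruct b; simpl.
  - apply canonical_designated, Hb; reflexivity.
  - destruct (canonical a) eqn:E; auto; exfalso;
      assert (Hd : designated (canonical a)) by (rewrite E; red; auto);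
      apply canonical_designated, Hb in Hd; discriminate.
Qed.

Lemma canonical_neg (a : form) : canonical a <> vT <-> Delta (Neg a).
Proof.
  rewrite canonical_T. split.
  - intro H. destruct (classic (Delta a)); [tauto | apply sat_neg_of_not; auto].
  - tauto.
Qed.

Lemma canonical_circ (a : form) : canonical a <> vt <-> Delta (Circ a).
Proof.
  rewrite canonical_t. split.
  - intro H. apply sat_circ_intro, sat_neg_of_not. rewrite sat_and. tauto.
  - intros Hc [Ha Hna]. exact (sat_circ_explosion a Hc Ha Hna).
Qed.

(* The restriction of F_mbCcl: an inconsistent a makes a /\ ~a take value T,
   since ~(a /\ ~a) would make a consistent (Ax12, Ax11). *)
Lemma canonical_restriction (a : form) :
  canonical a = vt -> canonical (And a (Neg a)) = vT.
Proof.
  rewrite canonical_t, canonical_T, sat_and. intros [Ha Hna]. split; [tauto|].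
  intro Hn. exact (sat_circ_explosion a (sat_circ_intro a Hn) Ha Hna).
Qed.

Lemma m_and_true (x y : tv) : m_and x y = true <-> designated x /\ designated y.
Proof. unfold designated; destruct x, y; simpl; intuition discriminate. Qed.

Lemma m_or_true (x y : tv) : m_or x y = true <-> designated x \/ designated y.
Proof. unfold designated; destruct x, y; simpl; intuition discriminate. Qed.

Lemma m_imp_true (x y : tv) : m_imp x y = true <-> ~ designated x \/ designated y.
Proof. unfold designated; destruct x, y; simpl; intuition discriminate. Qed.

Lemma m_neg_true (x : tv) : m_neg x = true <-> x <> vT.
Proof. destruct x; simpl; intuition discriminate. Qed.

Lemma m_circ_true (x : tv) : m_circ x = true <-> x <> vt.
Proof. destruct x; simpl; intuition discriminate. Qed.

Lemma canonical_F_mbCcl : F_mbCcl canonical.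
Proof.
  split; [repeat split; intros; apply canonical_memb | exact canonical_restriction].
  - rewrite m_neg_true. apply canonical_neg.
  - rewrite m_circ_true. apply canonical_circ.
  - rewrite m_and_true, !canonical_designated. symmetry; apply sat_and.
  - rewrite m_or_true, !canonical_designated. symmetry; apply sat_or.
  - rewrite m_imp_true, !canonical_designated. symmetry; apply sat_imp.
Qed.

End TruthLemmas.

Theorem mainTheorem4 (Gamma : form -> Prop) (phi : form) :
  RN_consequence Gamma phi -> derivable Gamma phi.
Proof.
  intro Hcons. apply NNPP; intro Hnd.
  destruct (lindenbaum Gamma phi Hnd) as [Delta [Hext Hsat]].
  apply (sat_avoids Delta phi Hsat).
  apply (canonical_designated Delta phi).
  apply Hcons; [exact (canonical_F_mbCcl Delta phi Hsat)|].
  intros g Hg. apply (canonical_designated Delta g), Hext, Hg.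
Qed.
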